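(* Let $d\ge 2$ be an integer and let $a_1,\dots,a_d,b_1,\dots,b_d$ be positive real numbers. Then there is a unique pair $(\lambda,f)=(\lambda,f_1,\dots,f_d)\in\mathbb{R}\times C^2([0,1];(0,\infty)^d)$ such that $$\sum_{i=1}^d\left(-\frac{f_i'}{f_i}\sum_{k=1}^d\frac{f_k'}{f_k}+\frac{f_i'^2}{f_i^2}\right)\Bigg|_{r=0}=(d-1)\lambda,$$ $$-\frac{f_i'}{f_i}\sum_{k=1}^d\frac{f_k'}{f_k}+\frac{f_i'^2}{f_i^2}-\frac{f_i''}{f_i}=\lambda\quad\text{on }[0,1],\ i=1,\dots,d,$$ and $f_i(0)=a_i$, $f_i(1)=b_i$ for each $i=1,\dots,d$.
   Context: These are the Einstein equations for a metric $dr\otimes dr+\sum_i f_i(r)^2\,dx_i^2$ on $\mathbb{T}^d\times[0,1]$ with Einstein constant $\lambda$; primes denote derivatives in $r\in[0,1]$. *)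

From Stdlib Require Import Reals.
From Coquelicot Require Import Coquelicot.
Open Scope R_scope.

Definition I01 (x : R) : Prop := 0 <= x <= 1.

Definition has_deriv_01 (f g : R -> R) : Prop :=
  forall x, I01 x ->
    filterlim (fun h => (f (x + h) - f x) / h)
      (within (fun h => h <> 0 /\ I01 (x + h)) (locally 0))
      (locally (g x)).

Definition cont_01 (g : R -> R) : Prop :=
  forall x, I01 x -> filterlim g (within I01 (locally x)) (locally (g x)).

(* Sum over k = 0, ..., d-1 (d >= 1). *)
Definition sumd (d : nat) (F : nat -> R) : R := sum_f_R0 F (pred d).

Definition is_solution (d : nat) (a b : nat -> R) (lam : R) (f : nat -> R -> R)
  : Prop :=
  exists f1 f2 : nat -> R -> R,
    (forall i, (i < d)%nat ->
       has_deriv_01 (f i) (f1 i) /\ has_deriv_01 (f1 i) (f2 i) /\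
       cont_01 (f2 i) /\ (forall r, I01 r -> 0 < f i r)) /\
    sumd d (fun i => - (f1 i 0 / f i 0) * sumd d (fun k => f1 k 0 / f k 0)
                     + (f1 i 0 / f i 0) ^ 2) = INR (d - 1) * lam /\
    (forall i r, (i < d)%nat -> I01 r ->
       - (f1 i r / f i r) * sumd d (fun k => f1 k r / f k r)
       + (f1 i r / f i r) ^ 2 - f2 i r / f i r = lam) /\
    (forall i, (i < d)%nat -> f i 0 = a i /\ f i 1 = b i).

(* With p_i = f_i'/f_i and S = p_1 + ... + p_d the equations read p_i' = -lam - S p_i.
   Hence S' = -d lam - S^2, the quantity sum p_i^2 - S^2 solves a homogeneous linear ODE
   and keeps its initial value (d-1) lam, and q_i = p_i - S/d satisfies q_i' = -S q_i, so
   q_i = c_i v with v = exp (- sum ln f_k).  Integrating, ln f_i is determined by v and the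
   c_i, and the boundary values force c_i (int_0^1 v) = beta_i, the centered log-ratio of
   b_i and a_i.  In the variable sigma = int_0^r v / int_0^1 v the function v solves
   v'' = gamma^2 v, where gamma^2 = d sum beta_i^2 / (d-1), with v = prod 1/a_k at 0 and
   prod 1/b_k at 1; so v(sigma) is the explicit hyperbolic function Y of that boundary
   value problem, and r is the normalised primitive of 1/Y at sigma.  Thus lam and f are
   determined, and the same formulas do define a solution. *)

From Stdlib Require Import Reals Ranalysis5 Lra Lia ClassicalEpsilon.
From Coquelicot Require Import Coquelicot.
Open Scope R_scope.

(** * Pointwise derivatives *)

Lemma derivable_pt_lim_eq f x l l' : derivable_pt_lim f x l -> l = l' ->
  derivable_pt_lim f x l'.
Proof. intros H ->; exact H. Qed.

Lemma derivable_pt_lim_scal_left c f x l : derivable_pt_lim f x l ->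
  derivable_pt_lim (fun y => c * f y) x (c * l).
Proof.
  intros H; apply (derivable_pt_lim_eq _ _ (0 * f x + c * l)); [| ring].
  exact (derivable_pt_lim_mult _ f x 0 l (derivable_pt_lim_const c x) H).
Qed.

Lemma derivable_pt_lim_lin g x : derivable_pt_lim (fun y => g * y) x g.
Proof.
  apply (derivable_pt_lim_eq _ _ (g * 1)); [|ring].
  apply derivable_pt_lim_scal_left, derivable_pt_lim_id.
Qed.

Lemma derivable_pt_lim_one_minus x : derivable_pt_lim (fun y => 1 - y) x (-1).
Proof.
  apply (derivable_pt_lim_eq _ _ (0 - 1)); [|ring].
  apply derivable_pt_lim_minus; [apply derivable_pt_lim_const | apply derivable_pt_lim_id].
Qed.

Lemma derivable_pt_lim_Rinv y : y <> 0 -> derivable_pt_lim Rinv y (- / y ^ 2).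
Proof.
  intros Hy; apply is_derive_Reals.
  replace (- / y ^ 2) with (- 1 / y ^ 2) by (field; exact Hy).
  exact (is_derive_inv (fun z => z) y 1 (is_derive_id y) Hy).
Qed.

Lemma continuity_pt_derivable f x l : derivable_pt_lim f x l -> continuity_pt f x.
Proof. intros H; apply derivable_continuous_pt; exact (exist _ l H). Qed.

Lemma derivable_pt_lim_RInt f : (forall x, continuity_pt f x) ->
  forall x, derivable_pt_lim (fun y => RInt f 0 y) x (f x).
Proof.
  intros C x; apply is_derive_Reals.
  apply (is_derive_RInt f (fun y => RInt f 0 y) 0 x).
  - apply filter_forall; intros y.
    apply (@RInt_correct R_CompleteNormedModule), (@ex_RInt_continuous R_CompleteNormedModule).
    intros z _; apply continuity_pt_filterlim, C.
  - apply continuity_pt_filterlim, C.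
Qed.

Lemma derivable_pos_incr F F' : (forall x, derivable_pt_lim F x (F' x)) ->
  (forall x, 0 < F' x) -> forall x y, x < y -> F x < F y.
Proof.
  intros D P x y Hxy.
  destruct (MVT_gen F x y F') as [c [_ E]].
  - intros z _; apply is_derive_Reals, D.
  - intros z _; exact (continuity_pt_derivable F z _ (D z)).
  - specialize (P c); nra.
Qed.

Lemma derivable_pt_lim_inverse F F' s : (forall x, derivable_pt_lim F x (F' x)) ->
  (forall x, 0 < F' x) -> (forall r, F (s r) = r) ->
  forall r, derivable_pt_lim s r (/ F' (s r)).
Proof.
  intros D P Inv r.
  assert (Finc := derivable_pos_incr F F' D P).
  assert (Sinc : forall x y, x < y -> s x < s y).
  { intros x y Hxy; destruct (Rlt_le_dec (s x) (s y)) as [Hs|Hs]; [exact Hs|].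
    destruct (Rle_lt_or_eq_dec _ _ Hs) as [Hs'|Hs'].
    - apply Finc in Hs'; rewrite !Inv in Hs'; lra.
    - rewrite <- (Inv x), <- (Inv y), Hs' in Hxy; lra. }
  assert (Sle : forall x y, x <= y -> s x <= s y).
  { intros x y Hxy; destruct (Rle_lt_or_eq_dec _ _ Hxy) as [H|H]; [|subst; lra].
    apply Rlt_le, Sinc, H. }
  assert (PrF : forall a, s (r - 1) <= a <= s (r + 1) -> derivable_pt F a).
  { intros a _; exact (exist _ _ (D a)). }
  assert (Cs : continuity_pt s r).
  { apply (continuity_pt_recip_interv F s (s (r - 1)) (s (r + 1))).
    - apply Sinc; lra.
    - intros x y _ Hxy _; apply Finc, Hxy.
    - intros x _ _; apply Inv.
    - intros x H1 H2; rewrite Inv in H1, H2; split; apply Sle; lra.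
    - intros a _; exact (continuity_pt_derivable F a _ (D a)).
    - rewrite !Inv; lra. }
  assert (Hin : s (r - 1) <= s r <= s (r + 1)) by (split; apply Sle; lra).
  specialize (P (s r)).
  pose proof (derivable_pt_lim_recip_interv F s (r - 1) (r + 1) r PrF Cs
     ltac:(lra) ltac:(lra) Hin) as H.
  rewrite (derive_pt_eq_0 F (s r) (F' (s r)) (PrF (s r) Hin) (D (s r))) in H.
  replace (/ F' (s r)) with (1 / F' (s r)) by (field; lra).
  apply H; [intros x _; apply Inv | lra].
Qed.

(** * Differentiable functions on [0,1] *)

Lemma ball_R_Rabs (x e y : R) : ball x e y <-> Rabs (y - x) < e.
Proof. reflexivity. Qed.

Definition clamp01 (x : R) : R := Rmax 0 (Rmin x 1).

Lemma clamp01_id x : I01 x -> clamp01 x = x.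
Proof.
  intros [H0 H1]; unfold clamp01.
  rewrite Rmin_left, Rmax_right; lra.
Qed.

Lemma clamp01_I01 x : I01 (clamp01 x).
Proof.
  unfold I01, clamp01; split; [apply Rmax_l|].
  apply Rmax_lub; [lra | apply Rmin_r].
Qed.

Lemma clamp01_dist x y : Rabs (clamp01 y - clamp01 x) <= Rabs (y - x).
Proof.
  unfold clamp01, Rmax, Rmin.
  repeat destruct Rle_dec; unfold Rabs; repeat destruct Rcase_abs; lra.
Qed.

Lemma continuity_pt_clamp01 x : continuity_pt clamp01 x.
Proof.
  intros e He; exists e; split; [exact He|].
  intros t [_ Ht]; simpl in *; unfold R_dist in *.
  pose proof (clamp01_dist x t); lra.
Qed.

(* Functions on [0,1] are extended to R by precomposing with [clamp01], so that
   one-sided continuity at 0 and 1 becomes ordinary continuity. *)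
Definition continuous01 (h : R -> R) : Prop :=
  forall x, I01 x -> continuity_pt (fun t => h (clamp01 t)) x.

Definition deriv01 (h h' : R -> R) : Prop :=
  continuous01 h /\ forall x, 0 < x < 1 -> derivable_pt_lim h x (h' x).

Lemma has_deriv_01_eps f g x : has_deriv_01 f g -> I01 x -> forall e, 0 < e ->
  exists del, 0 < del /\ forall h, h <> 0 -> Rabs h < del -> I01 (x + h) ->
    Rabs ((f (x + h) - f x) / h - g x) < e.
Proof.
  intros Hfg Hx e He.
  destruct (Hfg x Hx (ball (g x) e) (locally_ball (g x) (mkposreal e He))) as [del Hdel].
  exists del; split; [apply cond_pos|].
  intros h Hh0 Hh Hxh.
  apply Hdel; [apply ball_R_Rabs; rewrite Rminus_0_r; exact Hh | split; assumption].
Qed.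

Lemma has_deriv_01_lipschitz f g x : has_deriv_01 f g -> I01 x ->
  exists del, 0 < del /\ forall h, Rabs h < del -> I01 (x + h) ->
    Rabs (f (x + h) - f x) <= (Rabs (g x) + 1) * Rabs h.
Proof.
  intros Hfg Hx.
  destruct (has_deriv_01_eps f g x Hfg Hx 1 Rlt_0_1) as [del [Hdel Hq]].
  exists del; split; [exact Hdel|]; intros h Hh Hxh.
  destruct (Req_dec h 0) as [->|Hh0].
  { rewrite Rplus_0_r, Rminus_diag, Rabs_R0; lra. }
  specialize (Hq h Hh0 Hh Hxh).
  replace (f (x + h) - f x) with ((f (x + h) - f x) / h * h) by (field; exact Hh0).
  rewrite Rabs_mult; apply Rmult_le_compat_r; [apply Rabs_pos|].
  pose proof (Rabs_triang_inv ((f (x + h) - f x) / h) (g x)); lra.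
Qed.

Lemma has_deriv_01_continuous01 f g : has_deriv_01 f g -> continuous01 f.
Proof.
  intros Hfg x Hx e He.
  destruct (has_deriv_01_lipschitz f g x Hfg Hx) as [del [Hdel Hlip]].
  set (M := Rabs (g x) + 1).
  assert (HM : 0 < M) by (unfold M; pose proof (Rabs_pos (g x)); lra).
  exists (Rmin del (e / M)); split.
  { apply Rmin_pos; [lra | apply Rdiv_lt_0_compat; lra]. }
  intros t [_ Ht]; simpl in *; unfold R_dist in *.
  pose proof (clamp01_dist x t) as Hct; rewrite (clamp01_id x Hx) in Hct |- *.
  pose proof (Rmin_l del (e / M)); pose proof (Rmin_r del (e / M)).
  specialize (Hlip (clamp01 t - x)).
  replace (x + (clamp01 t - x)) with (clamp01 t) in Hlip by ring.
  specialize (Hlip ltac:(lra) (clamp01_I01 t)).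
  apply Rle_lt_trans with (1 := Hlip).
  replace e with (M * (e / M)) by (field; lra).
  apply Rmult_lt_compat_l; lra.
Qed.

Lemma has_deriv_01_interior f g x : has_deriv_01 f g -> 0 < x < 1 ->
  derivable_pt_lim f x (g x).
Proof.
  intros Hfg Hx e He.
  destruct (has_deriv_01_eps f g x Hfg ltac:(unfold I01; lra) e He) as [del [Hdel Hq]].
  assert (Hpos : 0 < Rmin del (Rmin x (1 - x))) by (repeat apply Rmin_pos; lra).
  exists (mkposreal _ Hpos); intros h Hh0 Hh; simpl in Hh.
  pose proof (Rmin_l del (Rmin x (1 - x))); pose proof (Rmin_r del (Rmin x (1 - x))).
  pose proof (Rmin_l x (1 - x)); pose proof (Rmin_r x (1 - x)).
  apply Hq; [exact Hh0 | lra |].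
  unfold I01; unfold Rabs in Hh; destruct Rcase_abs in Hh; lra.
Qed.

Lemma has_deriv_01_deriv01 f g : has_deriv_01 f g -> deriv01 f g.
Proof.
  intros Hfg; split.
  - exact (has_deriv_01_continuous01 f g Hfg).
  - intros x Hx; exact (has_deriv_01_interior f g x Hfg Hx).
Qed.

Lemma derivable_has_deriv_01 f f' :
  (forall x, I01 x -> derivable_pt_lim f x (f' x)) -> has_deriv_01 f f'.
Proof.
  intros Hf x Hx P [e He].
  destruct (Hf x Hx e (cond_pos e)) as [del Hdel].
  exists del; intros h Hh [Hh0 _]; apply He, ball_R_Rabs.
  apply Hdel; [exact Hh0 |].
  pose proof (proj1 (ball_R_Rabs 0 del h) Hh) as Hh'; rewrite Rminus_0_r in Hh'; exact Hh'.
Qed.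

Lemma continuity_cont_01 f : (forall x, I01 x -> continuity_pt f x) -> cont_01 f.
Proof.
  intros Hf x Hx P [e He].
  destruct (Hf x Hx e (cond_pos e)) as [del [Hdel Hf']].
  exists (mkposreal del Hdel); intros y Hy _; apply He, ball_R_Rabs.
  destruct (Req_dec y x) as [->|Hyx].
  { rewrite Rminus_diag, Rabs_R0; apply cond_pos. }
  apply Hf'; split; [split; [exact I | auto] | exact Hy].
Qed.

Lemma continuous01_of_continuity h : (forall x, I01 x -> continuity_pt h x) ->
  continuous01 h.
Proof.
  intros H x Hx.
  apply (continuity_pt_comp clamp01 h x (continuity_pt_clamp01 x)).
  rewrite clamp01_id by exact Hx; exact (H x Hx).
Qed.

Lemma continuous01_comp h phi : continuous01 h ->
  (forall x, I01 x -> continuity_pt phi (h x)) -> continuous01 (fun x => phi (h x)).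
Proof.
  intros Hh Hphi x Hx.
  apply (continuity_pt_comp (fun t => h (clamp01 t)) phi x (Hh x Hx)).
  rewrite clamp01_id by exact Hx; exact (Hphi x Hx).
Qed.

Lemma continuous01_everywhere h : continuous01 h ->
  forall x, continuity_pt (fun t => h (clamp01 t)) x.
Proof.
  intros H x.
  apply (continuity_pt_ext (fun t => h (clamp01 (clamp01 t)))).
  { intros t; rewrite (clamp01_id (clamp01 t) (clamp01_I01 t)); reflexivity. }
  apply (continuity_pt_comp clamp01 (fun t => h (clamp01 t)) x (continuity_pt_clamp01 x)).
  exact (H (clamp01 x) (clamp01_I01 x)).
Qed.

Lemma deriv01_of_derivable h h' :
  (forall x, I01 x -> derivable_pt_lim h x (h' x)) -> deriv01 h h'.
Proof.
  intros H; split.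
  - apply continuous01_of_continuity; intros x Hx.
    exact (continuity_pt_derivable h x _ (H x Hx)).
  - intros x Hx; apply H; unfold I01; lra.
Qed.

Lemma deriv01_ext h h' g g' : deriv01 h h' -> (forall x, I01 x -> h x = g x) ->
  (forall x, 0 < x < 1 -> h' x = g' x) -> deriv01 g g'.
Proof.
  intros [Hc Hd] E E'; split.
  - intros x Hx; apply (continuity_pt_ext (fun t => h (clamp01 t))); [|exact (Hc x Hx)].
    intros t; apply E, clamp01_I01.
  - intros x Hx; rewrite <- E' by exact Hx.
    apply (derivable_pt_lim_locally_ext h g x 0 1 _ Hx); [|exact (Hd x Hx)].
    intros z Hz; apply E; unfold I01; lra.
Qed.

Lemma deriv01_const c : deriv01 (fun _ => c) (fun _ => 0).
Proof. apply deriv01_of_derivable; intros; apply derivable_pt_lim_const. Qed.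

Lemma deriv01_plus h1 h1' h2 h2' : deriv01 h1 h1' -> deriv01 h2 h2' ->
  deriv01 (fun x => h1 x + h2 x) (fun x => h1' x + h2' x).
Proof.
  intros [C1 D1] [C2 D2]; split.
  - intros x Hx; exact (continuity_pt_plus _ _ x (C1 x Hx) (C2 x Hx)).
  - intros x Hx; exact (derivable_pt_lim_plus _ _ x _ _ (D1 x Hx) (D2 x Hx)).
Qed.

Lemma deriv01_minus h1 h1' h2 h2' : deriv01 h1 h1' -> deriv01 h2 h2' ->
  deriv01 (fun x => h1 x - h2 x) (fun x => h1' x - h2' x).
Proof.
  intros [C1 D1] [C2 D2]; split.
  - intros x Hx; exact (continuity_pt_minus _ _ x (C1 x Hx) (C2 x Hx)).
  - intros x Hx; exact (derivable_pt_lim_minus _ _ x _ _ (D1 x Hx) (D2 x Hx)).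
Qed.

Lemma deriv01_mult h1 h1' h2 h2' : deriv01 h1 h1' -> deriv01 h2 h2' ->
  deriv01 (fun x => h1 x * h2 x) (fun x => h1' x * h2 x + h1 x * h2' x).
Proof.
  intros [C1 D1] [C2 D2]; split.
  - intros x Hx; exact (continuity_pt_mult _ _ x (C1 x Hx) (C2 x Hx)).
  - intros x Hx; exact (derivable_pt_lim_mult _ _ x _ _ (D1 x Hx) (D2 x Hx)).
Qed.

Lemma deriv01_scal c h h' : deriv01 h h' ->
  deriv01 (fun x => c * h x) (fun x => c * h' x).
Proof.
  intros H; apply (deriv01_ext _ _ _ _ (deriv01_mult _ _ _ _ (deriv01_const c) H));
    intros; ring.
Qed.

Lemma deriv01_sq h h' : deriv01 h h' ->
  deriv01 (fun x => h x ^ 2) (fun x => 2 * h x * h' x).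
Proof.
  intros H; apply (deriv01_ext _ _ _ _ (deriv01_mult _ _ _ _ H H)); intros; ring.
Qed.

Lemma deriv01_comp h h' phi phi' (P : R -> Prop) : deriv01 h h' ->
  (forall x, I01 x -> P (h x)) -> (forall y, P y -> derivable_pt_lim phi y (phi' y)) ->
  deriv01 (fun x => phi (h x)) (fun x => phi' (h x) * h' x).
Proof.
  intros [C D] HP Hphi; split.
  - apply continuous01_comp; [exact C|].
    intros x Hx; exact (continuity_pt_derivable _ _ _ (Hphi _ (HP x Hx))).
  - intros x Hx; apply (derivable_pt_lim_comp h phi x); [exact (D x Hx)|].
    apply Hphi, HP; unfold I01; lra.
Qed.

Lemma deriv01_comp_derivable h h' phi phi' : deriv01 h h' ->
  (forall y, derivable_pt_lim phi y (phi' y)) ->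
  deriv01 (fun x => phi (h x)) (fun x => phi' (h x) * h' x).
Proof.
  intros H Hphi; apply (deriv01_comp h h' phi phi' (fun _ => True) H); [easy|].
  intros y _; apply Hphi.
Qed.

Lemma deriv01_exp h h' : deriv01 h h' ->
  deriv01 (fun x => exp (h x)) (fun x => exp (h x) * h' x).
Proof. intros H; apply (deriv01_comp_derivable h h' exp exp H derivable_pt_lim_exp). Qed.

Lemma deriv01_sum (h h' : nat -> R -> R) n :
  (forall k, (k <= n)%nat -> deriv01 (h k) (h' k)) ->
  deriv01 (fun x => sum_f_R0 (fun k => h k x) n) (fun x => sum_f_R0 (fun k => h' k x) n).
Proof.
  induction n as [|n IH]; intros H; simpl.
  - apply H; lia.
  - apply deriv01_plus; [apply IH; intros; apply H; lia | apply H; lia].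
Qed.

Lemma derivable_pt_lim_clamp01 h x l : 0 < x < 1 -> derivable_pt_lim h x l ->
  derivable_pt_lim (fun t => h (clamp01 t)) x l.
Proof.
  intros Hx; apply (derivable_pt_lim_locally_ext _ _ x 0 1 _ Hx).
  intros z Hz; rewrite clamp01_id; [reflexivity | unfold I01; lra].
Qed.

Lemma deriv01_mvt h h' x y : deriv01 h h' -> 0 <= x -> x < y -> y <= 1 ->
  exists c, x < c < y /\ h y - h x = h' c * (y - x).
Proof.
  intros [C D] Hx Hxy Hy.
  set (hc := fun t => h (clamp01 t)).
  assert (Dhc : forall c, x < c < y -> derivable_pt_lim hc c (h' c)).
  { intros c Hc; apply derivable_pt_lim_clamp01, D; lra. }
  assert (pr1 : forall c, x < c < y -> derivable_pt hc c).
  { intros c Hc; exact (exist _ _ (Dhc c Hc)). }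
  assert (pr2 : forall c, x < c < y -> derivable_pt id c).
  { intros c _; apply derivable_pt_id. }
  destruct (MVT hc id x y pr1 pr2 Hxy) as [c [Hc E]].
  - intros c Hc; apply C; unfold I01; lra.
  - intros c _; apply derivable_continuous_pt, derivable_pt_id.
  - exists c; split; [exact Hc|].
    rewrite (derive_pt_eq_0 hc c (h' c) (pr1 c Hc) (Dhc c Hc)),
      (derive_pt_eq_0 id c 1 (pr2 c Hc) (derivable_pt_lim_id c)) in E.
    unfold hc, id in E; rewrite !clamp01_id in E by (unfold I01; lra); lra.
Qed.

Lemma deriv01_zero_const h h' : deriv01 h h' -> (forall x, 0 < x < 1 -> h' x = 0) ->
  forall x, I01 x -> h x = h 0.
Proof.
  intros D Z x [Hx0 Hx1].
  destruct (Req_dec x 0) as [->|Hx]; [reflexivity|].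
  destruct (deriv01_mvt h h' 0 x D) as [c [Hc E]]; try lra.
  rewrite Z in E by lra; lra.
Qed.

Lemma deriv01_pos_incr h h' x y : deriv01 h h' -> (forall x, 0 < x < 1 -> 0 < h' x) ->
  0 <= x -> x < y -> y <= 1 -> h x < h y.
Proof.
  intros D P Hx Hxy Hy.
  destruct (deriv01_mvt h h' x y D) as [c [Hc E]]; try lra.
  specialize (P c ltac:(lra)); nra.
Qed.

Lemma deriv01_linear_ode h h' m m' : deriv01 h h' -> deriv01 m m' ->
  (forall x, 0 < x < 1 -> h' x = - m' x * h x) ->
  forall r, I01 r -> h r * exp (m r) = h 0 * exp (m 0).
Proof.
  intros Dh Dm E r Hr.
  apply (deriv01_zero_const (fun x => h x * exp (m x))
           (fun x => h' x * exp (m x) + h x * (exp (m x) * m' x))); [| | exact Hr].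
  - apply deriv01_mult; [exact Dh | apply deriv01_exp, Dm].
  - intros x Hx; rewrite E by exact Hx; ring.
Qed.

(** * Hyperbolic solutions of [y'' = g^2 y] *)

Definition sinhg (g x : R) : R := if Req_EM_T g 0 then x else sinh (g * x) / g.

Definition coshg (g x : R) : R := cosh (g * x).

Lemma derivable_pt_lim_sinhg g x : derivable_pt_lim (sinhg g) x (coshg g x).
Proof.
  unfold sinhg, coshg; destruct (Req_EM_T g 0) as [->|Hg].
  - rewrite Rmult_0_l, cosh_0; apply derivable_pt_lim_id.
  - apply (derivable_pt_lim_ext (fun y => / g * sinh (g * y))).
    { intros; unfold Rdiv; ring. }
    apply (derivable_pt_lim_eq _ _ (/ g * (cosh (g * x) * g))); [|field; exact Hg].
    apply derivable_pt_lim_scal_left.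
    apply (derivable_pt_lim_comp (fun y => g * y) sinh).
    + apply derivable_pt_lim_lin.
    + apply derivable_pt_lim_sinh.
Qed.

Lemma derivable_pt_lim_coshg g x : derivable_pt_lim (coshg g) x (g ^ 2 * sinhg g x).
Proof.
  unfold sinhg, coshg.
  apply (derivable_pt_lim_eq _ _ (sinh (g * x) * g)).
  - apply (derivable_pt_lim_comp (fun y => g * y) cosh).
    + apply derivable_pt_lim_lin.
    + apply derivable_pt_lim_cosh.
  - destruct (Req_EM_T g 0) as [->|Hg]; [ring | field; exact Hg].
Qed.

Lemma derivable_pt_lim_sinhg_refl g x :
  derivable_pt_lim (fun y => sinhg g (1 - y)) x (- coshg g (1 - x)).
Proof.
  apply (derivable_pt_lim_eq _ _ (coshg g (1 - x) * -1)); [|ring].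
  apply (derivable_pt_lim_comp (fun y => 1 - y));
    [apply derivable_pt_lim_one_minus | apply derivable_pt_lim_sinhg].
Qed.

Lemma derivable_pt_lim_coshg_refl g x :
  derivable_pt_lim (fun y => - coshg g (1 - y)) x (g ^ 2 * sinhg g (1 - x)).
Proof.
  apply (derivable_pt_lim_eq _ _ (- (g ^ 2 * sinhg g (1 - x) * -1))); [|ring].
  apply derivable_pt_lim_opp, (derivable_pt_lim_comp (fun y => 1 - y));
    [apply derivable_pt_lim_one_minus | apply derivable_pt_lim_coshg].
Qed.

Lemma sinhg_0 g : sinhg g 0 = 0.
Proof. unfold sinhg; destruct Req_EM_T; [reflexivity|]; rewrite Rmult_0_r, sinh_0; field; auto. Qed.

Lemma coshg_0 g : coshg g 0 = 1.
Proof. unfold coshg; rewrite Rmult_0_r; apply cosh_0. Qed.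

Lemma sinhg_incr g x y : 0 <= g -> x < y -> sinhg g x < sinhg g y.
Proof.
  intros Hg Hxy; unfold sinhg; destruct (Req_EM_T g 0) as [_|Hg0]; [exact Hxy|].
  apply Rmult_lt_compat_r; [apply Rinv_0_lt_compat; lra|].
  apply sinh_lt; apply Rmult_lt_compat_l; lra.
Qed.

Lemma sinhg_nonneg g x : 0 <= g -> 0 <= x -> 0 <= sinhg g x.
Proof.
  intros Hg Hx; rewrite <- (sinhg_0 g).
  destruct (Rle_lt_or_eq_dec _ _ Hx) as [H|H]; [|subst; lra].
  apply Rlt_le, sinhg_incr; assumption.
Qed.

Lemma sinhg_add g x : coshg g (1 - x) * sinhg g x + coshg g x * sinhg g (1 - x) = sinhg g 1.
Proof.
  unfold coshg, sinhg; destruct (Req_EM_T g 0) as [->|Hg].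
  - rewrite !Rmult_0_l, cosh_0; ring.
  - replace (g * 1) with (g * (1 - x) + g * x) by ring.
    unfold sinh, cosh; rewrite Ropp_plus_distr, !exp_plus, !exp_Ropp.
    pose proof (exp_pos (g * (1 - x))); pose proof (exp_pos (g * x)).
    field; repeat split; lra.
Qed.

Section BoundaryValueProblem.
Variables (g ya yb : R).

Definition bvp_sol (x : R) : R := (ya * sinhg g (1 - x) + yb * sinhg g x) / sinhg g 1.

Definition bvp_sol' (x : R) : R := (- ya * coshg g (1 - x) + yb * coshg g x) / sinhg g 1.

Lemma derivable_pt_lim_bvp_sol x : derivable_pt_lim bvp_sol x (bvp_sol' x).
Proof.
  apply (derivable_pt_lim_eq _ _ ((ya * - coshg g (1 - x) + yb * coshg g x) / sinhg g 1));
    [|unfold bvp_sol', Rdiv; ring].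
  apply derivable_pt_lim_div_scal, derivable_pt_lim_plus; apply derivable_pt_lim_scal_left;
    [apply derivable_pt_lim_sinhg_refl | apply derivable_pt_lim_sinhg].
Qed.

Lemma derivable_pt_lim_bvp_sol' x : derivable_pt_lim bvp_sol' x (g ^ 2 * bvp_sol x).
Proof.
  apply (derivable_pt_lim_ext (fun y => (ya * - coshg g (1 - y) + yb * coshg g y) / sinhg g 1));
    [intros; unfold bvp_sol', Rdiv; ring|].
  apply (derivable_pt_lim_eq _ _
    ((ya * (g ^ 2 * sinhg g (1 - x)) + yb * (g ^ 2 * sinhg g x)) / sinhg g 1));
    [|unfold bvp_sol, Rdiv; ring].
  apply derivable_pt_lim_div_scal, derivable_pt_lim_plus; apply derivable_pt_lim_scal_left;
    [apply derivable_pt_lim_coshg_refl | apply derivable_pt_lim_coshg].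
Qed.

Lemma bvp_energy x : I01 x ->
  g ^ 2 * bvp_sol x ^ 2 - bvp_sol' x ^ 2 = g ^ 2 * bvp_sol 0 ^ 2 - bvp_sol' 0 ^ 2.
Proof.
  intros Hx; set (E := fun x => g ^ 2 * bvp_sol x ^ 2 - bvp_sol' x ^ 2); change (E x = E 0).
  apply (deriv01_zero_const E (fun _ => 0)); [| reflexivity | exact Hx].
  apply (deriv01_ext E (fun x => g ^ 2 * (INR 2 * bvp_sol x ^ 1 * bvp_sol' x)
                                   - INR 2 * bvp_sol' x ^ 1 * (g ^ 2 * bvp_sol x)));
    [| intros; reflexivity | intros; simpl; ring].
  apply deriv01_of_derivable; intros y _.
  apply derivable_pt_lim_minus; [apply derivable_pt_lim_scal_left|];
    apply (derivable_pt_lim_comp _ (fun z => z ^ 2));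
    try apply derivable_pt_lim_pow;
    [apply derivable_pt_lim_bvp_sol | apply derivable_pt_lim_bvp_sol'].
Qed.

Hypotheses (Hg : 0 <= g) (Hya : 0 < ya) (Hyb : 0 < yb).

Lemma sinhg_1_pos : 0 < sinhg g 1.
Proof. rewrite <- (sinhg_0 g); apply sinhg_incr; lra. Qed.

Lemma bvp_sol_0 : bvp_sol 0 = ya.
Proof.
  unfold bvp_sol; rewrite sinhg_0, Rminus_0_r.
  pose proof sinhg_1_pos; field; lra.
Qed.

Lemma bvp_sol_1 : bvp_sol 1 = yb.
Proof.
  unfold bvp_sol; rewrite Rminus_diag, sinhg_0.
  pose proof sinhg_1_pos; field; lra.
Qed.

Lemma bvp_sol_bounds x : I01 x -> 0 < bvp_sol x <= ya + yb.
Proof.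
  intros [H0 H1]; unfold bvp_sol; pose proof sinhg_1_pos.
  assert (Hl : 0 <= sinhg g (1 - x) <= sinhg g 1).
  { split; [apply sinhg_nonneg; lra|].
    destruct (Req_dec x 0) as [->|]; [rewrite Rminus_0_r; lra|].
    apply Rlt_le, sinhg_incr; lra. }
  assert (Hr : 0 <= sinhg g x <= sinhg g 1).
  { split; [apply sinhg_nonneg; lra|].
    destruct (Req_dec x 1) as [->|]; [lra|].
    apply Rlt_le, sinhg_incr; lra. }
  assert (0 < sinhg g (1 - x) \/ 0 < sinhg g x).
  { destruct (Req_dec x 1) as [->|]; [right; lra|].
    left; rewrite <- (sinhg_0 g); apply sinhg_incr; lra. }
  split.
  - apply Rdiv_lt_0_compat; [nra | lra].
  - apply Rmult_le_reg_r with (sinhg g 1); [lra|].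
    unfold Rdiv; rewrite Rmult_assoc, Rinv_l by lra; nra.
Qed.

Definition bvp_recip (t : R) : R := / bvp_sol (clamp01 t).

Definition bvp_time (x : R) : R := RInt bvp_recip 0 x.

Definition bvp_time_frac (x : R) : R := bvp_time x / bvp_time 1.

Definition bvp_time_frac_inv (r : R) : R := epsilon (inhabits 0) (fun x => bvp_time_frac x = r).

Lemma bvp_recip_bounds t : / (ya + yb) <= bvp_recip t /\ 0 < bvp_recip t.
Proof.
  destruct (bvp_sol_bounds (clamp01 t) (clamp01_I01 t)).
  split; [apply Rinv_le_contravar | apply Rinv_0_lt_compat]; assumption.
Qed.

Lemma continuity_pt_bvp_recip x : continuity_pt bvp_recip x.
Proof.
  apply (continuity_pt_inv (fun t => bvp_sol (clamp01 t))).
  - apply (continuity_pt_comp clamp01 bvp_sol x (continuity_pt_clamp01 x)).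
    exact (continuity_pt_derivable _ _ _ (derivable_pt_lim_bvp_sol _)).
  - pose proof (bvp_sol_bounds (clamp01 x) (clamp01_I01 x)); lra.
Qed.

Lemma derivable_pt_lim_bvp_time x : derivable_pt_lim bvp_time x (bvp_recip x).
Proof. apply derivable_pt_lim_RInt, continuity_pt_bvp_recip. Qed.

Lemma bvp_time_0 : bvp_time 0 = 0.
Proof. unfold bvp_time; rewrite RInt_point; reflexivity. Qed.

Lemma bvp_time_incr x y : x < y -> bvp_time x < bvp_time y.
Proof.
  apply (derivable_pos_incr _ _ derivable_pt_lim_bvp_time).
  intros; apply bvp_recip_bounds.
Qed.

Lemma bvp_time_1_pos : 0 < bvp_time 1.
Proof. rewrite <- bvp_time_0; apply bvp_time_incr; lra. Qed.

Lemma bvp_time_frac_linear_bound x :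
  (0 <= x -> x / ((ya + yb) * bvp_time 1) <= bvp_time_frac x) /\
  (x <= 0 -> bvp_time_frac x <= x / ((ya + yb) * bvp_time 1)).
Proof.
  pose proof bvp_time_1_pos.
  destruct (MVT_gen bvp_time 0 x bvp_recip) as [c [_ E]].
  - intros z _; apply is_derive_Reals, derivable_pt_lim_bvp_time.
  - intros z _; exact (continuity_pt_derivable _ _ _ (derivable_pt_lim_bvp_time z)).
  - rewrite bvp_time_0, !Rminus_0_r in E; unfold bvp_time_frac; rewrite E.
    destruct (bvp_recip_bounds c) as [Hc _].
    replace (x / ((ya + yb) * bvp_time 1)) with (/ (ya + yb) * x / bvp_time 1) by (field; lra).
    split; intros; apply Rmult_le_compat_r; try (apply Rlt_le, Rinv_0_lt_compat; lra); nra.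
Qed.

Lemma bvp_time_frac_surj r : exists x, bvp_time_frac x = r.
Proof.
  pose proof bvp_time_1_pos; pose proof (Rabs_pos r).
  pose proof (Rle_abs r); pose proof (Rle_abs (- r)); rewrite Rabs_Ropp in *.
  set (M := (Rabs r + 1) * ((ya + yb) * bvp_time 1)).
  assert (HM : 0 <= M) by (apply Rmult_le_pos; nra).
  destruct (bvp_time_frac_linear_bound M) as [Hup _].
  destruct (bvp_time_frac_linear_bound (- M)) as [_ Hlow].
  replace (M / ((ya + yb) * bvp_time 1)) with (Rabs r + 1) in Hup by (unfold M; field; lra).
  replace (- M / ((ya + yb) * bvp_time 1)) with (- (Rabs r + 1)) in Hlow by (unfold M; field; lra).
  specialize (Hup HM); specialize (Hlow ltac:(lra)).
  destruct (IVT_gen bvp_time_frac (- M) M r) as [x [_ Hx]].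
  - intros z; apply (continuity_pt_derivable _ _ (bvp_recip z / bvp_time 1)).
    apply derivable_pt_lim_div_scal, derivable_pt_lim_bvp_time.
  - split; [apply Rle_trans with (bvp_time_frac (- M)); [apply Rmin_l | lra]
           | apply Rle_trans with (bvp_time_frac M); [lra | apply Rmax_r]].
  - exists x; exact Hx.
Qed.

Lemma bvp_time_frac_inv_spec r : bvp_time_frac (bvp_time_frac_inv r) = r.
Proof. apply (epsilon_spec (inhabits 0) (fun x => bvp_time_frac x = r)), bvp_time_frac_surj. Qed.

Lemma bvp_time_frac_incr x y : x < y -> bvp_time_frac x < bvp_time_frac y.
Proof.
  intros Hxy; apply Rmult_lt_compat_r; [apply Rinv_0_lt_compat, bvp_time_1_pos|].
  apply bvp_time_incr, Hxy.
Qed.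

Lemma bvp_time_frac_inj x y : bvp_time_frac x = bvp_time_frac y -> x = y.
Proof.
  intros E; destruct (Rtotal_order x y) as [H|[H|H]]; [| exact H |];
    apply bvp_time_frac_incr in H; lra.
Qed.

Lemma bvp_time_frac_inv_0 : bvp_time_frac_inv 0 = 0.
Proof.
  apply bvp_time_frac_inj; rewrite bvp_time_frac_inv_spec.
  unfold bvp_time_frac; rewrite bvp_time_0; unfold Rdiv; ring.
Qed.

Lemma bvp_time_frac_inv_1 : bvp_time_frac_inv 1 = 1.
Proof.
  apply bvp_time_frac_inj; rewrite bvp_time_frac_inv_spec.
  unfold bvp_time_frac; pose proof bvp_time_1_pos; field; lra.
Qed.

Lemma bvp_time_frac_inv_I01 r : I01 r -> I01 (bvp_time_frac_inv r).
Proof.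
  assert (Hle : forall x y, x <= y -> bvp_time_frac_inv x <= bvp_time_frac_inv y).
  { intros x y Hxy; destruct (Rle_lt_dec (bvp_time_frac_inv x) (bvp_time_frac_inv y)) as [|H];
      [assumption|].
    apply bvp_time_frac_incr in H; rewrite !bvp_time_frac_inv_spec in H; lra. }
  intros [H0 H1]; split.
  - rewrite <- bvp_time_frac_inv_0; apply Hle, H0.
  - rewrite <- bvp_time_frac_inv_1; apply Hle, H1.
Qed.

Lemma derivable_pt_lim_bvp_time_frac_inv r : I01 r ->
  derivable_pt_lim bvp_time_frac_inv r (bvp_time 1 * bvp_sol (bvp_time_frac_inv r)).
Proof.
  intros Hr; pose proof bvp_time_1_pos.
  pose proof (bvp_time_frac_inv_I01 r Hr) as Hs.
  apply (derivable_pt_lim_eq _ _ (/ (bvp_recip (bvp_time_frac_inv r) / bvp_time 1))).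
  - apply (derivable_pt_lim_inverse bvp_time_frac (fun x => bvp_recip x / bvp_time 1)).
    + intros x; apply derivable_pt_lim_div_scal, derivable_pt_lim_bvp_time.
    + intros x; apply Rdiv_lt_0_compat; [apply bvp_recip_bounds | assumption].
    + exact bvp_time_frac_inv_spec.
  - unfold bvp_recip; rewrite clamp01_id by exact Hs.
    pose proof (bvp_sol_bounds _ Hs); field; lra.
Qed.

End BoundaryValueProblem.

(** * The explicit solution *)

(* [1 <= d] is needed because [sumd 0 F = F 0]. *)
Lemma sumd_ext d F G : (1 <= d)%nat -> (forall k, (k < d)%nat -> F k = G k) ->
  sumd d F = sumd d G.
Proof. intros Hd H; apply sum_eq; intros; apply H; lia. Qed.

Lemma sumd_plus d F G : sumd d (fun k => F k + G k) = sumd d F + sumd d G.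
Proof. apply plus_sum. Qed.

Lemma sumd_minus d F G : sumd d (fun k => F k - G k) = sumd d F - sumd d G.
Proof. apply minus_sum. Qed.

Lemma sumd_scal d c F : sumd d (fun k => c * F k) = c * sumd d F.
Proof. unfold sumd; rewrite scal_sum; apply sum_eq; intros; ring. Qed.

Lemma sumd_const d c : (1 <= d)%nat -> sumd d (fun _ => c) = INR d * c.
Proof. intros Hd; unfold sumd; rewrite sum_cte; replace (S (pred d)) with d by lia; ring. Qed.

Lemma sumd_sq_centered d u x : (1 <= d)%nat -> sumd d x = 0 ->
  sumd d (fun i => (u + x i) ^ 2) = INR d * u ^ 2 + sumd d (fun i => x i ^ 2).
Proof.
  intros Hd Hx.
  rewrite (sumd_ext d _ (fun i => u ^ 2 + (2 * u * x i + x i ^ 2))) by (auto; intros; ring).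
  rewrite sumd_plus, sumd_plus, sumd_const, sumd_scal, Hx by exact Hd; ring.
Qed.

Lemma deriv01_sumd d (h h' : nat -> R -> R) : (1 <= d)%nat ->
  (forall k, (k < d)%nat -> deriv01 (h k) (h' k)) ->
  deriv01 (fun x => sumd d (fun k => h k x)) (fun x => sumd d (fun k => h' k x)).
Proof. intros Hd H; apply deriv01_sum; intros k Hk; apply H; lia. Qed.

Definition log_sum (d : nat) (c : nat -> R) : R := sumd d (fun k => ln (c k)).

Definition centered_log_ratio (d : nat) (a b : nat -> R) (i : nat) : R :=
  ln (b i) - ln (a i) - (log_sum d b - log_sum d a) / INR d.

Definition hyp_rate (d : nat) (a b : nat -> R) : R :=
  sqrt (INR d * sumd d (fun i => centered_log_ratio d a b i ^ 2) / (INR d - 1)).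

Lemma INR_ge_2 d : (2 <= d)%nat -> 2 <= INR d.
Proof. intros Hd; apply (le_INR 2) in Hd; exact Hd. Qed.

Lemma sum_centered_log_ratio d a b : (1 <= d)%nat ->
  sumd d (fun i => centered_log_ratio d a b i) = 0.
Proof.
  intros Hd; unfold centered_log_ratio.
  rewrite sumd_minus, sumd_minus, sumd_const by exact Hd; unfold log_sum.
  apply (lt_INR 0) in Hd; simpl in Hd; field; lra.
Qed.

Lemma sum_sq_centered_log_ratio d a b : (2 <= d)%nat ->
  sumd d (fun i => centered_log_ratio d a b i ^ 2) = hyp_rate d a b ^ 2 * (INR d - 1) / INR d.
Proof.
  intros Hd; pose proof (INR_ge_2 d Hd); unfold hyp_rate.
  rewrite <- Rsqr_pow2, Rsqr_sqrt; [field; lra|].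
  apply Rmult_le_pos; [apply Rmult_le_pos; [lra|] | apply Rlt_le, Rinv_0_lt_compat; lra].
  apply cond_pos_sum; intros; apply pow2_ge_0.
Qed.

Section Existence.
Variables (d : nat) (a b : nat -> R).

Let gm := hyp_rate d a b.
Let ya := exp (- log_sum d a).
Let yb := exp (- log_sum d b).
Let Y := bvp_sol gm ya yb.
Let Y' := bvp_sol' gm ya yb.
Let J := bvp_time gm ya yb 1.
Let s := bvp_time_frac_inv gm ya yb.
Let beta := centered_log_ratio d a b.

Definition sol_lambda : R := J ^ 2 * (gm ^ 2 * ya ^ 2 - Y' 0 ^ 2) / INR d.

Definition sol_f (i : nat) (r : R) : R :=
  exp (ln (a i) - (ln (Y (s r)) + log_sum d a) / INR d + beta i * s r).

(* [sol_p i] is the logarithmic derivative of [sol_f i]. *)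
Definition sol_p (i : nat) (r : R) : R := J * (- Y' (s r) / INR d + beta i * Y (s r)).

Definition sol_p' (i : nat) (r : R) : R :=
  J ^ 2 * Y (s r) * (- gm ^ 2 * Y (s r) / INR d + beta i * Y' (s r)).

Hypotheses (Hd : (2 <= d)%nat) (Ha : forall i, (i < d)%nat -> 0 < a i)
  (Hb : forall i, (i < d)%nat -> 0 < b i).

Let Hgm : 0 <= gm. Proof. apply sqrt_pos. Qed.
Let Hya : 0 < ya. Proof. apply exp_pos. Qed.
Let Hyb : 0 < yb. Proof. apply exp_pos. Qed.
Let HdR : 2 <= INR d. Proof. exact (INR_ge_2 d Hd). Qed.
Let Y_0 : Y 0 = ya. Proof. apply bvp_sol_0; assumption. Qed.
Let Y_1 : Y 1 = yb. Proof. apply bvp_sol_1; assumption. Qed.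
Let sum_beta : sumd d beta = 0.
Proof. apply sum_centered_log_ratio; lia. Qed.
Let sum_sq_beta : sumd d (fun i => beta i ^ 2) = gm ^ 2 * (INR d - 1) / INR d.
Proof. apply sum_sq_centered_log_ratio, Hd. Qed.

Lemma sol_time_I01 r : I01 r -> I01 (s r).
Proof. apply bvp_time_frac_inv_I01; assumption. Qed.

Lemma sol_Y_pos r : I01 r -> 0 < Y (s r).
Proof. intros Hr; apply bvp_sol_bounds, sol_time_I01; assumption. Qed.

Lemma derivable_pt_lim_sol_time r : I01 r -> derivable_pt_lim s r (J * Y (s r)).
Proof. apply derivable_pt_lim_bvp_time_frac_inv; assumption. Qed.

Lemma derivable_pt_lim_sol_Y r : I01 r ->
  derivable_pt_lim (fun x => Y (s x)) r (Y' (s r) * (J * Y (s r))).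
Proof.
  intros Hr; apply (derivable_pt_lim_comp s Y);
    [apply derivable_pt_lim_sol_time, Hr | apply derivable_pt_lim_bvp_sol].
Qed.

Lemma derivable_pt_lim_sol_Y' r : I01 r ->
  derivable_pt_lim (fun x => Y' (s x)) r (gm ^ 2 * Y (s r) * (J * Y (s r))).
Proof.
  intros Hr; apply (derivable_pt_lim_comp s Y');
    [apply derivable_pt_lim_sol_time, Hr | apply derivable_pt_lim_bvp_sol'].
Qed.

Lemma derivable_pt_lim_sol_f i r : I01 r ->
  derivable_pt_lim (sol_f i) r (sol_f i r * sol_p i r).
Proof.
  intros Hr; pose proof (sol_Y_pos r Hr); unfold sol_f.
  apply (derivable_pt_lim_eq _ _
    (exp (ln (a i) - (ln (Y (s r)) + log_sum d a) / INR d + beta i * s r)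
     * (0 - (/ Y (s r) * (Y' (s r) * (J * Y (s r))) + 0) / INR d + beta i * (J * Y (s r))))).
  2:{ unfold sol_p; field; lra. }
  apply (derivable_pt_lim_comp _ exp); [|apply derivable_pt_lim_exp].
  apply derivable_pt_lim_plus; [apply derivable_pt_lim_minus|].
  - apply derivable_pt_lim_const.
  - apply derivable_pt_lim_div_scal, derivable_pt_lim_plus; [|apply derivable_pt_lim_const].
    apply (derivable_pt_lim_comp (fun x => Y (s x)) ln);
      [apply derivable_pt_lim_sol_Y, Hr | apply derivable_pt_lim_ln; assumption].
  - apply derivable_pt_lim_scal_left, derivable_pt_lim_sol_time, Hr.
Qed.

Lemma derivable_pt_lim_sol_p i r : I01 r -> derivable_pt_lim (sol_p i) r (sol_p' i r).
Proof.
  intros Hr; unfold sol_p, sol_p'.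
  apply (derivable_pt_lim_eq _ _
    (J * (- (gm ^ 2 * Y (s r) * (J * Y (s r))) / INR d
          + beta i * (Y' (s r) * (J * Y (s r)))))); [| field; lra].
  apply derivable_pt_lim_scal_left, derivable_pt_lim_plus.
  - apply (derivable_pt_lim_ext (fun x => / INR d * - Y' (s x))); [intros; unfold Rdiv; ring|].
    apply (derivable_pt_lim_eq _ _ (/ INR d * - (gm ^ 2 * Y (s r) * (J * Y (s r)))));
      [| unfold Rdiv; ring].
    apply derivable_pt_lim_scal_left, derivable_pt_lim_opp, derivable_pt_lim_sol_Y', Hr.
  - apply derivable_pt_lim_scal_left, derivable_pt_lim_sol_Y, Hr.
Qed.

Lemma continuity_pt_sol_p' i r : I01 r -> continuity_pt (sol_p' i) r.
Proof.
  intros Hr.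
  pose proof (continuity_pt_derivable _ _ _ (derivable_pt_lim_sol_Y r Hr)) as CY.
  pose proof (continuity_pt_derivable _ _ _ (derivable_pt_lim_sol_Y' r Hr)) as CY'.
  set (u := fun x => Y (s x)) in CY; set (u' := fun x => Y' (s x)) in CY'.
  apply (continuity_pt_ext
    (fun x => J ^ 2 * u x * ((- gm ^ 2 / INR d) * u x + beta i * u' x)));
    [intros; unfold sol_p', u, u', Rdiv; ring|].
  clearbody u u'.
  assert (Cc : forall c, continuity_pt (fun _ => c) r).
  { intros c; apply continuity_pt_const; intros ? ?; reflexivity. }
  repeat first [apply continuity_pt_mult | apply continuity_pt_plus]; auto.
Qed.

Lemma sol_time_0 : s 0 = 0.
Proof. apply bvp_time_frac_inv_0; assumption. Qed.

Lemma sol_time_1 : s 1 = 1.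
Proof. apply bvp_time_frac_inv_1; assumption. Qed.

Lemma sum_sol_p r : sumd d (fun k => sol_p k r) = - J * Y' (s r).
Proof.
  unfold sol_p.
  rewrite (sumd_ext d _ (fun k => J * (- Y' (s r) / INR d) + J * Y (s r) * beta k))
    by (try lia; intros; ring).
  rewrite sumd_plus, sumd_const, sumd_scal, sum_beta by lia.
  field; lra.
Qed.

Lemma sol_initial_constraint :
  sumd d (fun i => - sol_p i 0 * sumd d (fun k => sol_p k 0) + sol_p i 0 ^ 2)
  = INR (d - 1) * sol_lambda.
Proof.
  rewrite sum_sol_p.
  rewrite (sumd_ext d _ (fun i => J * Y' (s 0) * sol_p i 0 + sol_p i 0 ^ 2))
    by (try lia; intros; ring).
  rewrite sumd_plus, sumd_scal, sum_sol_p.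
  rewrite (sumd_ext d _ (fun i => (- J * Y' 0 / INR d + J * ya * beta i) ^ 2))
    by (try lia; intros; unfold sol_p; rewrite sol_time_0, Y_0; field; lra).
  rewrite sumd_sq_centered by (try rewrite sumd_scal, sum_beta; lia || ring).
  rewrite (sumd_ext d _ (fun i => J ^ 2 * ya ^ 2 * beta i ^ 2)) by (try lia; intros; ring).
  rewrite sumd_scal, sum_sq_beta, sol_time_0, minus_INR by lia.
  unfold sol_lambda; simpl (INR 1); field; lra.
Qed.

Lemma sol_equation i r : I01 r ->
  - sol_p i r * sumd d (fun k => sol_p k r) - sol_p' i r = sol_lambda.
Proof.
  intros Hr; rewrite sum_sol_p; unfold sol_p, sol_p', sol_lambda.
  pose proof (bvp_energy gm ya yb (s r) (sol_time_I01 r Hr)) as E.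
  rewrite bvp_sol_0 in E by assumption; fold Y Y' in E.
  rewrite <- E; field; lra.
Qed.

Lemma sol_f_boundary i : (i < d)%nat -> sol_f i 0 = a i /\ sol_f i 1 = b i.
Proof.
  intros Hi; unfold sol_f; rewrite sol_time_0, sol_time_1, Y_0, Y_1; unfold ya, yb.
  rewrite !ln_exp.
  unfold beta, centered_log_ratio; split.
  - replace (ln (a i) - (- log_sum d a + log_sum d a) / INR d + _ * 0) with (ln (a i))
      by (field; lra).
    apply exp_ln, Ha, Hi.
  - replace (ln (a i) - (- log_sum d b + log_sum d a) / INR d + _ * 1) with (ln (b i))
      by (field; lra).
    apply exp_ln, Hb, Hi.
Qed.

Lemma sol_f_pos i r : 0 < sol_f i r.
Proof. apply exp_pos. Qed.

Theorem sol_is_solution : is_solution d a b sol_lambda sol_f.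
Proof.
  assert (Hp : forall i r, sol_f i r * sol_p i r / sol_f i r = sol_p i r).
  { intros; pose proof (sol_f_pos i r); field; lra. }
  exists (fun i r => sol_f i r * sol_p i r),
         (fun i r => sol_f i r * (sol_p i r ^ 2 + sol_p' i r)).
  split; [|split; [|split]].
  - intros i Hi; split; [|split; [|split]].
    + apply derivable_has_deriv_01; intros r Hr; apply derivable_pt_lim_sol_f, Hr.
    + apply derivable_has_deriv_01; intros r Hr.
      apply (derivable_pt_lim_eq _ _ (sol_f i r * sol_p i r * sol_p i r + sol_f i r * sol_p' i r));
        [|ring].
      apply derivable_pt_lim_mult; [apply derivable_pt_lim_sol_f | apply derivable_pt_lim_sol_p];
        exact Hr.
    + apply continuity_cont_01; intros r Hr; apply continuity_pt_mult.
      * exact (continuity_pt_derivable _ _ _ (derivable_pt_lim_sol_f i r Hr)).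
      * apply continuity_pt_plus; [|apply continuity_pt_sol_p', Hr].
        apply (continuity_pt_comp (sol_p i) (fun y => y ^ 2)).
        -- exact (continuity_pt_derivable _ _ _ (derivable_pt_lim_sol_p i r Hr)).
        -- exact (continuity_pt_derivable _ _ _ (derivable_pt_lim_pow _ 2)).
    + intros; apply sol_f_pos.
  - rewrite <- sol_initial_constraint; apply sumd_ext; [lia|]; intros i _.
    rewrite !Hp; f_equal; f_equal; apply sumd_ext; [lia|]; intros; apply Hp.
  - intros i r Hi Hr; rewrite <- (sol_equation i r Hr), !Hp.
    rewrite (sumd_ext d _ (fun k => sol_p k r)) by (try lia; intros; apply Hp).
    pose proof (sol_f_pos i r); field; lra.
  - exact sol_f_boundary.
Qed.

End Existence.

(** * Uniqueness *)

Section Uniqueness.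
Variables (d : nat) (a b : nat -> R) (lam : R) (f f1 f2 : nat -> R -> R).

Hypotheses (Hd : (2 <= d)%nat)
  (Hreg : forall i, (i < d)%nat ->
     has_deriv_01 (f i) (f1 i) /\ has_deriv_01 (f1 i) (f2 i) /\
     cont_01 (f2 i) /\ (forall r, I01 r -> 0 < f i r))
  (Hinit : sumd d (fun i => - (f1 i 0 / f i 0) * sumd d (fun k => f1 k 0 / f k 0)
                            + (f1 i 0 / f i 0) ^ 2) = INR (d - 1) * lam)
  (Heq : forall i r, (i < d)%nat -> I01 r ->
     - (f1 i r / f i r) * sumd d (fun k => f1 k r / f k r)
     + (f1 i r / f i r) ^ 2 - f2 i r / f i r = lam)
  (Hbd : forall i, (i < d)%nat -> f i 0 = a i /\ f i 1 = b i).

Let HdR : 2 <= INR d. Proof. exact (INR_ge_2 d Hd). Qed.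
Let p i r := f1 i r / f i r.
Let S r := sumd d (fun k => p k r).
Let L r := sumd d (fun k => ln (f k r)).
Let v r := exp (- L r).

Lemma deriv01_logderiv i : (i < d)%nat -> deriv01 (p i) (fun r => - lam - p i r * S r).
Proof.
  intros Hi; destruct (Hreg i Hi) as [D1 [D2 [_ Hpos]]].
  apply (deriv01_ext (fun r => f1 i r * / f i r)
           (fun r => f2 i r * / f i r + f1 i r * (- / f i r ^ 2 * f1 i r))).
  - apply deriv01_mult; [apply has_deriv_01_deriv01, D2|].
    apply (deriv01_comp (f i) (f1 i) Rinv (fun y => - / y ^ 2) (fun y => 0 < y));
      [apply has_deriv_01_deriv01, D1 | exact Hpos |].
    intros y Hy; apply derivable_pt_lim_Rinv; lra.
  - intros; reflexivity.
  - intros x Hx; assert (Hx' : I01 x) by (unfold I01; lra).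
    pose proof (Hpos x Hx'); rewrite <- (Heq i x Hi Hx'); unfold S, p; field; lra.
Qed.

Lemma deriv01_logderiv_sum : deriv01 S (fun r => - INR d * lam - S r ^ 2).
Proof.
  apply (deriv01_ext _ _ _ _ (deriv01_sumd d _ _ ltac:(lia) deriv01_logderiv));
    [intros; reflexivity|].
  intros x _.
  rewrite (sumd_ext d _ (fun k => (- lam) + (- S x) * p k x)) by (try lia; intros; ring).
  rewrite sumd_plus, sumd_const, sumd_scal by lia; unfold S; ring.
Qed.

Lemma deriv01_ln i : (i < d)%nat -> deriv01 (fun r => ln (f i r)) (p i).
Proof.
  intros Hi; destruct (Hreg i Hi) as [D1 [_ [_ Hpos]]].
  apply (deriv01_ext _ _ _ _ (deriv01_comp (f i) (f1 i) ln Rinv (fun y => 0 < y)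
           (has_deriv_01_deriv01 _ _ D1) Hpos (fun y Hy => derivable_pt_lim_ln y Hy)));
    [intros; reflexivity|].
  intros x Hx; unfold p; pose proof (Hpos x ltac:(unfold I01; lra)); field; lra.
Qed.

Lemma deriv01_log_sum : deriv01 L S.
Proof. apply (deriv01_sumd d (fun k r => ln (f k r)) p); [lia | exact deriv01_ln]. Qed.

Lemma deriv01_v : deriv01 v (fun r => - S r * v r).
Proof.
  apply (deriv01_ext _ _ _ _ (deriv01_exp _ _ (deriv01_scal (-1) _ _ deriv01_log_sum)));
    intros x _; unfold v; replace (-1 * L x) with (- L x) by ring; ring.
Qed.

(* [sum p_k^2 - S^2] satisfies a linear ODE with zero initial value (the constraint at 0). *)
Lemma sum_logderiv_sq r : I01 r -> sumd d (fun k => p k r ^ 2) - S r ^ 2 = (INR d - 1) * lam.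
Proof.
  intros Hr.
  set (Q := fun r => sumd d (fun k => p k r ^ 2) - S r ^ 2 - (INR d - 1) * lam).
  assert (DQ : deriv01 Q (fun r => sumd d (fun k => 2 * p k r * (- lam - p k r * S r))
                 - 2 * S r * (- INR d * lam - S r ^ 2) - 0)).
  { apply deriv01_minus; [apply deriv01_minus | apply deriv01_const].
    - apply (deriv01_sumd d (fun k r => p k r ^ 2)); [lia|]; intros k Hk.
      apply deriv01_sq, deriv01_logderiv, Hk.
    - apply deriv01_sq, deriv01_logderiv_sum. }
  assert (HQ0 : Q 0 = 0).
  { pose proof Hinit as H0; rewrite minus_INR in H0 by lia; simpl (INR 1) in H0.
    rewrite (sumd_ext d _ (fun i => (- S 0) * p i 0 + p i 0 ^ 2)) in H0
      by (try lia; intros; unfold S, p; ring).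
    rewrite sumd_plus, sumd_scal in H0; unfold Q; rewrite <- H0; unfold S; ring. }
  pose proof (deriv01_linear_ode Q _ _ _ DQ (deriv01_scal 2 _ _ deriv01_log_sum)) as H.
  rewrite HQ0, Rmult_0_l in H.
  assert (HQ : Q r = 0).
  { pose proof (exp_pos (2 * L r)); apply (Rmult_eq_reg_r (exp (2 * L r))); [|lra].
    rewrite Rmult_0_l; apply H; [|exact Hr].
    intros x _; rewrite (sumd_ext d _ (fun k => (- 2 * lam) * p k x + (- 2 * S x) * p k x ^ 2))
      by (try lia; intros; ring).
    rewrite sumd_plus, !sumd_scal; unfold Q; fold (S x); ring. }
  unfold Q in HQ; lra.
Qed.
Let q i r := p i r - S r / INR d.
Let c i := q i 0 * exp (L 0).

Lemma centered_logderiv_eq i r : (i < d)%nat -> I01 r -> q i r = c i * v r.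
Proof.
  intros Hi Hr.
  assert (Dq : deriv01 (q i)
                 (fun x => (- lam - p i x * S x) - / INR d * (- INR d * lam - S x ^ 2))).
  { apply (deriv01_ext _ _ _ _ (deriv01_minus _ _ _ _ (deriv01_logderiv i Hi)
             (deriv01_scal (/ INR d) _ _ deriv01_logderiv_sum))); intros;
      [unfold q, Rdiv; ring | reflexivity]. }
  assert (E : q i r * exp (L r) = q i 0 * exp (L 0)).
  { apply (deriv01_linear_ode (q i) _ _ _ Dq deriv01_log_sum); [|exact Hr].
    intros x _; unfold q; field; lra. }
  unfold c, v; rewrite exp_Ropp, <- E; field; apply Rgt_not_eq, exp_pos.
Qed.

Lemma sum_centered_logderiv r : sumd d (fun i => q i r) = 0.
Proof.
  unfold q; rewrite sumd_minus, sumd_const by lia; unfold S; field; lra.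
Qed.

Let L_0 : L 0 = log_sum d a.
Proof. apply sumd_ext; [lia|]; intros k Hk; rewrite (proj1 (Hbd k Hk)); reflexivity. Qed.

Let L_1 : L 1 = log_sum d b.
Proof. apply sumd_ext; [lia|]; intros k Hk; rewrite (proj2 (Hbd k Hk)); reflexivity. Qed.
Let tau r := RInt (fun t => v (clamp01 t)) 0 r.
Let T := tau 1.

Lemma deriv01_tau : deriv01 tau v.
Proof.
  destruct deriv01_v as [Cv _].
  apply deriv01_of_derivable; intros x Hx.
  apply (derivable_pt_lim_eq _ _ (v (clamp01 x))); [|rewrite clamp01_id by exact Hx; reflexivity].
  apply (derivable_pt_lim_RInt (fun t => v (clamp01 t))), continuous01_everywhere, Cv.
Qed.

Let tau_0 : tau 0 = 0.
Proof. unfold tau; rewrite RInt_point; reflexivity. Qed.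

Let T_pos : 0 < T.
Proof.
  unfold T; rewrite <- tau_0.
  apply (deriv01_pos_incr tau v 0 1 deriv01_tau); [intros; apply exp_pos | lra | lra | lra].
Qed.

Lemma ln_f_eq i r : (i < d)%nat -> I01 r ->
  ln (f i r) = ln (a i) + (L r - L 0) / INR d + c i * tau r.
Proof.
  intros Hi Hr.
  set (h := fun x => ln (f i x) - L x / INR d - c i * tau x).
  assert (Dh : deriv01 h (fun x => p i x - / INR d * S x - c i * v x)).
  { apply deriv01_minus; [apply deriv01_minus|].
    - exact (deriv01_ln i Hi).
    - apply (deriv01_ext _ _ _ _ (deriv01_scal (/ INR d) _ _ deriv01_log_sum));
        intros; [unfold Rdiv; ring | reflexivity].
    - apply deriv01_scal, deriv01_tau. }
  pose proof (deriv01_zero_const h _ Dh) as H0.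
  assert (Hh : h r = h 0).
  { apply H0; [|exact Hr]; intros x Hx.
    rewrite <- centered_logderiv_eq by (auto; unfold I01; lra); unfold q; field; lra. }
  unfold h in Hh; rewrite tau_0, (proj1 (Hbd i Hi)) in Hh.
  replace ((L r - L 0) / INR d) with (L r / INR d - L 0 / INR d) by (field; lra); lra.
Qed.
Let gm := hyp_rate d a b.
Let ya := exp (- log_sum d a).
Let yb := exp (- log_sum d b).

Let v_0 : v 0 = ya.
Proof. unfold v; rewrite L_0; reflexivity. Qed.

Let v_1 : v 1 = yb.
Proof. unfold v; rewrite L_1; reflexivity. Qed.

Let c_T i : (i < d)%nat -> c i * T = centered_log_ratio d a b i.
Proof.
  intros Hi; pose proof (ln_f_eq i 1 Hi ltac:(unfold I01; lra)) as E.
  rewrite L_0, L_1, (proj2 (Hbd i Hi)) in E; fold T in E.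
  unfold centered_log_ratio; rewrite E; field; lra.
Qed.

(* Both sides compute [T^2 * sum q_i^2]: from [sum_logderiv_sq], and from [q_i = c_i v]. *)
Lemma v_energy r : I01 r -> T ^ 2 * (S r ^ 2 + INR d * lam) = gm ^ 2 * v r ^ 2.
Proof.
  intros Hr.
  assert (Hp : sumd d (fun k => p k r ^ 2)
               = INR d * (S r / INR d) ^ 2 + sumd d (fun i => q i r ^ 2)).
  { rewrite <- sumd_sq_centered by (lia || apply sum_centered_logderiv).
    apply sumd_ext; [lia|]; intros; unfold q; f_equal; ring. }
  assert (Hq : sumd d (fun i => q i r ^ 2) = (INR d - 1) * (S r ^ 2 + INR d * lam) / INR d).
  { pose proof (sum_logderiv_sq r Hr).
    replace (sumd d (fun i => q i r ^ 2))
      with (sumd d (fun k => p k r ^ 2) - INR d * (S r / INR d) ^ 2) by lra.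
    replace (sumd d (fun k => p k r ^ 2)) with ((INR d - 1) * lam + S r ^ 2) by lra.
    field; lra. }
  assert (Hc : sumd d (fun i => T ^ 2 * q i r ^ 2) = v r ^ 2 * (gm ^ 2 * (INR d - 1) / INR d)).
  { unfold gm; rewrite <- sum_sq_centered_log_ratio, <- sumd_scal by exact Hd.
    apply sumd_ext; [lia|]; intros i Hi.
    rewrite centered_logderiv_eq, <- c_T by assumption; ring. }
  rewrite sumd_scal, Hq in Hc.
  apply (Rmult_eq_reg_r ((INR d - 1) / INR d)); [|apply Rgt_not_eq, Rdiv_lt_0_compat; lra].
  transitivity (T ^ 2 * ((INR d - 1) * (S r ^ 2 + INR d * lam) / INR d)); [field; lra|].
  rewrite Hc; field; lra.
Qed.
Let sg r := tau r / T.
Let w r := - T * S r.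

Lemma deriv01_sg : deriv01 sg (fun r => v r / T).
Proof.
  apply (deriv01_ext _ _ _ _ (deriv01_scal (/ T) _ _ deriv01_tau));
    intros; unfold sg, Rdiv; ring.
Qed.

Let sg_0 : sg 0 = 0.
Proof. unfold sg; rewrite tau_0; unfold Rdiv; ring. Qed.

Let sg_1 : sg 1 = 1.
Proof. unfold sg; fold T; pose proof T_pos; field; lra. Qed.

Lemma sg_I01 r : I01 r -> I01 (sg r).
Proof.
  pose proof T_pos.
  assert (Hincr : forall x y, 0 <= x -> x < y -> y <= 1 -> sg x < sg y).
  { intros x y; apply (deriv01_pos_incr sg _ x y deriv01_sg).
    intros; apply Rdiv_lt_0_compat; [apply exp_pos | lra]. }
  intros [H0 H1]; split.
  - rewrite <- sg_0; destruct (Req_dec r 0) as [->|]; [lra|]; apply Rlt_le, Hincr; lra.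
  - rewrite <- sg_1; destruct (Req_dec r 1) as [->|]; [lra|]; apply Rlt_le, Hincr; lra.
Qed.

(* In the variable [sg], [v] has derivative [w] and second derivative [gm^2 v] (by
   [v_energy]); so its Wronskian with any solution of [F'' = gm^2 F] is constant. *)
Lemma wronskian_const F F' : (forall x, derivable_pt_lim F x (F' x)) ->
  (forall x, derivable_pt_lim F' x (gm ^ 2 * F x)) ->
  forall r, I01 r -> v r * F' (sg r) - w r * F (sg r) = v 0 * F' (sg 0) - w 0 * F (sg 0).
Proof.
  intros DF DF'; pose proof T_pos.
  assert (Dw : deriv01 w (fun r => - T * (- INR d * lam - S r ^ 2)))
    by exact (deriv01_scal _ _ _ deriv01_logderiv_sum).
  assert (DFs := deriv01_comp_derivable sg _ F F' deriv01_sg DF).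
  assert (DF's := deriv01_comp_derivable sg _ F' _ deriv01_sg DF').
  apply (deriv01_zero_const _ _
    (deriv01_minus _ _ _ _ (deriv01_mult _ _ _ _ deriv01_v DF's) (deriv01_mult _ _ _ _ Dw DFs))).
  intros x Hx; pose proof (v_energy x ltac:(unfold I01; lra)) as E.
  transitivity (F (sg x) / T * (gm ^ 2 * v x ^ 2 - T ^ 2 * (S x ^ 2 + INR d * lam)));
    [unfold w; field; lra | rewrite E; ring].
Qed.

Lemma wronskian_sinhg r : I01 r -> v r * coshg gm (sg r) - w r * sinhg gm (sg r) = ya.
Proof.
  intros Hr.
  rewrite (wronskian_const _ _ (derivable_pt_lim_sinhg gm) (derivable_pt_lim_coshg gm) r Hr).
  rewrite sg_0, v_0, sinhg_0, coshg_0; ring.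
Qed.

Lemma wronskian_sinhg_refl r : I01 r ->
  v r * coshg gm (1 - sg r) + w r * sinhg gm (1 - sg r) = yb.
Proof.
  intros Hr.
  pose proof (wronskian_const _ _ (derivable_pt_lim_sinhg_refl gm)
                (derivable_pt_lim_coshg_refl gm)) as W.
  pose proof (W 1 ltac:(unfold I01; lra)) as W1; specialize (W r Hr); cbv beta in W, W1.
  rewrite sg_1, v_1, Rminus_diag, sinhg_0, coshg_0 in W1; lra.
Qed.

Lemma v_bvp_sol r : I01 r -> v r = bvp_sol gm ya yb (sg r).
Proof.
  intros Hr; pose proof (sinhg_1_pos gm (sqrt_pos _)).
  transitivity (v r * sinhg gm 1 / sinhg gm 1); [field; lra|].
  unfold bvp_sol; rewrite <- (wronskian_sinhg r Hr), <- (wronskian_sinhg_refl r Hr).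
  rewrite <- (sinhg_add gm (sg r)) at 1; f_equal; ring.
Qed.

Let w_0 : w 0 = bvp_sol' gm ya yb 0.
Proof.
  pose proof (sinhg_1_pos gm (sqrt_pos _)).
  pose proof (wronskian_sinhg_refl 0 ltac:(unfold I01; lra)) as W.
  rewrite sg_0, v_0, Rminus_0_r in W.
  unfold bvp_sol'; rewrite Rminus_0_r, coshg_0, <- W; field; lra.
Qed.
Let Hgm : 0 <= gm. Proof. apply sqrt_pos. Qed.
Let Hya : 0 < ya. Proof. apply exp_pos. Qed.
Let Hyb : 0 < yb. Proof. apply exp_pos. Qed.

Lemma bvp_time_sg r : I01 r -> bvp_time gm ya yb (sg r) = r / T.
Proof.
  intros Hr; pose proof T_pos.
  set (h := fun x => bvp_time gm ya yb (sg x) - / T * x).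
  assert (Dh : deriv01 h (fun x => bvp_recip gm ya yb (sg x) * (v x / T) - / T * 1)).
  { apply deriv01_minus.
    - apply (deriv01_comp_derivable sg _ _ _ deriv01_sg), derivable_pt_lim_bvp_time;
        assumption.
    - apply deriv01_scal, deriv01_of_derivable; intros; apply derivable_pt_lim_id. }
  assert (E : h r = h 0).
  { apply (deriv01_zero_const h _ Dh); [|exact Hr]; intros x Hx.
    assert (Hx' : I01 x) by (unfold I01; lra).
    unfold bvp_recip; rewrite clamp01_id, <- v_bvp_sol by (auto using sg_I01).
    pose proof (exp_pos (- L x)); fold (v x) in *; field; lra. }
  unfold h in E; rewrite sg_0, bvp_time_0 in E; unfold Rdiv; lra.
Qed.

Let bvp_time_1_T : bvp_time gm ya yb 1 = / T.
Proof.
  pose proof (bvp_time_sg 1 ltac:(unfold I01; lra)) as E.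
  rewrite sg_1 in E; rewrite E; unfold Rdiv; ring.
Qed.

Lemma sg_eq_bvp_time_frac_inv r : I01 r -> sg r = bvp_time_frac_inv gm ya yb r.
Proof.
  intros Hr; pose proof T_pos.
  apply (bvp_time_frac_inj gm ya yb Hgm Hya Hyb); rewrite bvp_time_frac_inv_spec by assumption.
  unfold bvp_time_frac; rewrite bvp_time_sg, bvp_time_1_T by exact Hr.
  field; lra.
Qed.

Theorem solution_unique :
  lam = sol_lambda d a b /\ (forall i r, (i < d)%nat -> I01 r -> f i r = sol_f d a b i r).
Proof.
  pose proof T_pos; split.
  - pose proof (v_energy 0 ltac:(unfold I01; lra)) as E.
    unfold sol_lambda; fold gm ya yb; rewrite bvp_time_1_T, <- w_0, <- v_0; unfold w.
    apply (Rmult_eq_reg_r (T ^ 2 * INR d)); [|apply Rgt_not_eq, Rmult_lt_0_compat; nra].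
    rewrite <- E; field; lra.
  - intros i r Hi Hr; destruct (Hreg i Hi) as [_ [_ [_ Hpos]]].
    rewrite <- (exp_ln (f i r)) by (apply Hpos, Hr).
    unfold sol_f; fold gm ya yb; f_equal.
    rewrite ln_f_eq, L_0, <- (c_T i Hi), <- sg_eq_bvp_time_frac_inv, <- v_bvp_sol by assumption.
    unfold v, sg; rewrite ln_exp; field; lra.
Qed.

End Uniqueness.

Theorem theorem3p1 (d : nat) (a b : nat -> R) :
  (2 <= d)%nat ->
  (forall i, (i < d)%nat -> 0 < a i) ->
  (forall i, (i < d)%nat -> 0 < b i) ->
  exists (lam : R) (f : nat -> R -> R),
    is_solution d a b lam f /\
    (forall (lam' : R) (g : nat -> R -> R), is_solution d a b lam' g ->
       lam' = lam /\ (forall i r, (i < d)%nat -> I01 r -> g i r = f i r)).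
Proof.
  intros Hd Ha Hb.
  exists (sol_lambda d a b), (sol_f d a b); split.
  - exact (sol_is_solution d a b Hd Ha Hb).
  - intros lam g [g1 [g2 [Hreg [Hinit [Heq Hbd]]]]].
    exact (solution_unique d a b lam g g1 g2 Hd Hreg Hinit Heq Hbd).
Qed.
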